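(* For any $\varepsilon\in(0,1]$ and $D\in\mathbb{N}$ there exists a constant $c>0$ such that $|[M]_\varepsilon|\le c|M|$ for every $n\in\mathbb{N}$ and every $M\subseteq[n]^D$.
   Context: $\mathcal{L}$ is the set of all axis-parallel lines in $[n]^D$, i.e. sets $A_1\times\cdots\times A_D$ with $A_i=[n]$ for one $i$ and $|A_j|=1$ for all $j\ne i$. The $\varepsilon$-closure $[M]_\varepsilon$ of $M\subseteq[n]^D$ is the minimum set containing $M$ such that for every line $\ell\in\mathcal{L}$ either $\ell\subseteq[M]_\varepsilon$ or $|\ell\cap[M]_\varepsilon|<\varepsilon n$. *)

From HB Require Import structures.
From mathcomp Require Import all_boot all_order all_algebra.
From mathcomp Require Import boolp reals.
Set Implicit Arguments. Unset Strict Implicit. Unset Printing Implicit Defensive.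
Import Order.TTheory GRing.Theory Num.Theory.
Local Open Scope ring_scope.

(* Points of [n]^D are functions 'I_D -> 'I_n (coordinates 0..n-1). *)
Definition grid (D n : nat) := {ffun 'I_D -> 'I_n}.

(* The axis-parallel line through x in direction i:
   all y agreeing with x on every coordinate j <> i.
   Every axis-parallel line is of this form (for some i and x). *)
Definition axis_line (D n : nat) (i : 'I_D) (x : grid D n) : {set grid D n} :=
  [set y : grid D n | [forall j : 'I_D, (j != i) ==> (y j == x j)]].

Definition eps_closed (R : realType) (eps : R) (D n : nat) (S : {set grid D n}) : Prop :=
  forall (i : 'I_D) (x : grid D n),
    axis_line i x \subset S \/ (#|axis_line i x :&: S|%:R < eps * n%:R).

Definition eps_closure (R : realType) (eps : R) (D n : nat) (M : {set grid D n})
  : {set grid D n} :=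
  [set x : grid D n | `[< forall S : {set grid D n},
                           M \subset S -> eps_closed eps S -> x \in S >]].

(* Fix a > 0 with 2^D a < eps and call x J-dense, for a set J of directions,
   when the subcube through x spanned by J contains at least (a n)^|J| points
   of M.  The set H of points that are J-dense for some J contains M
   (take J empty) and is eps-closed.  Indeed, if a point of a line in
   direction i is J-dense with i in J, so is the whole line, which lies in the
   same subcube.  Otherwise, for each J not containing i, at most a n points
   of the line are J-dense, since their J-subcubes together would make the
   (J + i)-subcube through the line dense; so the line meets H in at most
   2^D a n < eps n points.  Double counting the pairs (x, y) with y in M in
   the J-subcube of x shows that at most |M| / a^|J| points are J-dense,
   hence |[M]_eps| <= |H| <= 2^D a^-D |M|. *)

From HB Require Import structures.
From mathcomp Require Import all_boot all_order all_algebra.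
From mathcomp Require Import boolp reals.
Import Order.TTheory GRing.Theory Num.Theory.
Set Implicit Arguments. Unset Strict Implicit.

Lemma card_bigcup_le (I T : finType) (P : pred I) (F : I -> {set T}) :
  #|\bigcup_(i | P i) F i| <= \sum_(i | P i) #|F i|.
Proof.
elim/big_ind2: _ => [|m A k B leA leB|]; rewrite ?cards0 //.
by rewrite (leq_trans (leq_card_setU A B).1) ?leq_add.
Qed.

Section Subcubes.
Variables D n : nat.
Implicit Types (x y : grid D n) (i : 'I_D) (J : {set 'I_D}).
Implicit Type A : {set grid D n}.

Definition upd x i (t : 'I_n) : grid D n :=
  [ffun j => if j == i then t else x j].

Definition subcube J x : {set grid D n} :=
  [set y : grid D n | [forall j, (j \notin J) ==> (y j == x j)]].

Lemma subcube_sym J x y : (y \in subcube J x) = (x \in subcube J y).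
Proof.
by rewrite !inE; apply/forallP/forallP => + j => /(_ j); rewrite eq_sym.
Qed.

Lemma subcube0 x : subcube set0 x = [set x].
Proof.
apply/setP => y; rewrite !inE; apply/forallP/eqP => [yx | ->]; last first.
  by move=> j; rewrite eqxx implybT.
by apply/ffunP => j; apply/eqP; have := yx j; rewrite inE.
Qed.

Lemma axis_line_subcube i x : axis_line i x = subcube [set i] x.
Proof.
by apply/setP => y; rewrite !inE; under eq_forallb => j do rewrite inE.
Qed.

Lemma mem_subcubeU1 J i x y t : i \notin J ->
  (y \in subcube (i |: J) x) && (y i == t) = (y \in subcube J (upd x i t)).
Proof.
move=> iJ; rewrite !inE; apply/andP/forallP => [[/forallP yx /eqP yi] j | yx].
  rewrite ffunE; case: (j =P i) => [-> | /eqP ji].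
    by rewrite yi eqxx implybT.
  by have := yx j; rewrite !inE negb_or ji.
split; last by have := yx i; rewrite iJ ffunE eqxx.
apply/forallP => j; apply/implyP; rewrite !inE negb_or => /andP [ji jJ].
by have := yx j; rewrite jJ ffunE (negbTE ji).
Qed.

Lemma card_subcubeU1 A J i x : i \notin J ->
  #|A :&: subcube (i |: J) x| = \sum_t #|A :&: subcube J (upd x i t)|.
Proof.
move=> iJ; rewrite -sum1_card (partition_big (fun y => y i) xpredT) //=.
apply: eq_bigr => t _; rewrite -sum1_card; apply: eq_bigl => y.
by rewrite !in_setI -andbA mem_subcubeU1.
Qed.

Lemma card_subcube J x : #|subcube J x| = n ^ #|J|.
Proof.
move cardJ: #|J| => k; elim: k J cardJ x => [|k IHk] J cardJ x.
  by move/eqP: cardJ; rewrite cards_eq0 => /eqP ->; rewrite subcube0 cards1.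
have [i iJ] : exists i, i \in J by apply/set0Pn; rewrite -card_gt0 cardJ.
have iJi : i \notin J :\ i by rewrite !inE eqxx.
have cardJi : #|J :\ i| = k by move: cardJ; rewrite (cardsD1 i J) iJ => -[].
rewrite -(setD1K iJ) -[subcube _ _]setTI card_subcubeU1 //.
under eq_bigr => t _ do rewrite setTI IHk //.
by rewrite sum_nat_const card_ord expnS.
Qed.

Lemma sum_card_subcube A J : \sum_x #|A :&: subcube J x| = #|A| * n ^ #|J|.
Proof.
rewrite -sum_nat_const.
under [RHS]eq_bigr => y _ do rewrite -(card_subcube J y).
under eq_bigr => x _ do rewrite -sum1_card.
under [RHS]eq_bigr => y _ do rewrite -sum1_card.
rewrite (exchange_big_dep (mem A)) => [|x y _ /setIP []//] /=.
by apply: eq_bigr => y yA; apply: eq_bigl => x; rewrite in_setI yA subcube_sym.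
Qed.

Lemma upd_axis_line i x t : upd x i t \in axis_line i x.
Proof.
rewrite inE; apply/forallP => j; rewrite ffunE.
by case: (j =P i) => _; rewrite ?eqxx.
Qed.

Lemma subcube_axis_line J i x y : i \in J -> y \in axis_line i x ->
  subcube J y = subcube J x.
Proof.
move=> iJ /[!inE] /forallP yx; apply/setP => z; rewrite !inE.
apply: eq_forallb => j; apply: implyb_id2l => jJ.
have ji : j != i by apply: contraNneq jJ => ->.
by rewrite (eqP (implyP (yx j) ji)).
Qed.

Lemma card_axis_line A i x :
  #|A :&: axis_line i x| = #|[set t | upd x i t \in A]|.
Proof.
rewrite axis_line_subcube -(setU0 [set i]) card_subcubeU1 ?inE //.
rewrite -sum1dep_card [RHS]big_mkcond /=; apply: eq_bigr => t _.
rewrite subcube0; case: ifP => uA.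
  by rewrite (setIidPr _) ?cards1 // sub1set.
by apply/eqP; rewrite cards_eq0 setIC setI_eq0 disjoints1 uA.
Qed.

End Subcubes.

Local Open Scope ring_scope.

Lemma markov_card (T : finType) (R : numDomainType) (f : T -> R) (c : R) :
  (forall t, 0 <= f t) -> #|[set t | c <= f t]|%:R * c <= \sum_t f t.
Proof.
move=> f_ge0; rewrite mulr_natl -sumr_const big_mkcond /=.
by apply: ler_sum => t _; rewrite inE; case: ifP.
Qed.

Lemma eps_closure_min (R : realType) (eps : R) D n (M S : {set grid D n}) :
  M \subset S -> eps_closed eps S -> eps_closure eps M \subset S.
Proof. by move=> MS S_closed; apply/subsetP => x /[!inE] /asboolP; apply. Qed.

Section DenseHull.
Variables (R : realType) (D n : nat) (M : {set grid D n}) (a : R).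
Hypothesis a_gt0 : 0 < a.
Let a_ge0 : 0 <= a := ltW a_gt0.
Implicit Types (x y : grid D n) (i : 'I_D) (J : {set 'I_D}).

Definition dense J x : bool :=
  a ^+ #|J| * (n ^ #|J|)%N%:R <= #|M :&: subcube J x|%:R.

Definition dense_hull : {set grid D n} := \bigcup_J [set x | dense J x].

Lemma sub_dense_hull : M \subset dense_hull.
Proof.
apply/subsetP => x xM; apply/bigcupP; exists set0 => //.
rewrite inE /dense cards0 expr0 expn0 mul1r subcube0.
by rewrite (setIidPr _) ?sub1set // cards1.
Qed.

Lemma dense_axis_line J i x y : i \in J -> y \in axis_line i x ->
  dense J y = dense J x.
Proof. by move=> iJ yx; rewrite /dense (subcube_axis_line iJ yx). Qed.

Lemma card_dense J : #|[set x | dense J x]|%:R * a ^+ #|J| <= #|M|%:R.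
Proof.
have [/eqP | nJ_gt0] := posnP (n ^ #|J|).
  rewrite expn_eq0 => /andP [/eqP n0 /card_gt0P [j _]].
  rewrite (_ : [set x | dense J x] = set0) ?cards0 ?mul0r //.
  by apply/setP => x; case: (x j) => m m_lt; rewrite n0 in m_lt.
have := @markov_card _ R (fun x => #|M :&: subcube J x|%:R : R)
  (a ^+ #|J| * (n ^ #|J|)%N%:R) (fun _ => ler0n _ _).
by rewrite -natr_sum sum_card_subcube natrM mulrA ler_pM2r ?ltr0n.
Qed.

Lemma card_dense_upd J i x : i \notin J -> ~~ dense (i |: J) x ->
  #|[set t | dense J (upd x i t)]|%:R <= a * n%:R.
Proof.
move=> iJ; have [n0 | n_gt0] := posnP n.
  move=> _; rewrite (_ : [set t | _] = set0) ?cards0 ?mulr_ge0 ?ler0n //.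
  by apply/setP => -[m mn]; exfalso; move: mn; rewrite n0.
rewrite /dense cardsU1 iJ add1n -ltNge card_subcubeU1 // natr_sum => sparse.
have := @markov_card _ R (fun t => #|M :&: subcube J (upd x i t)|%:R : R)
  (a ^+ #|J| * (n ^ #|J|)%N%:R) (fun _ => ler0n _ _).
move=> /le_lt_trans /(_ sparse).
rewrite exprS expnS natrM mulrACA ltr_pM2r => [/ltW //|].
by rewrite mulr_gt0 ?exprn_gt0 ?ltr0n ?expn_gt0 ?n_gt0.
Qed.

Lemma card_axis_line_dense_hull i x : (forall J, i \in J -> ~~ dense J x) ->
  #|axis_line i x :&: dense_hull|%:R <= #|{set 'I_D}|%:R * a * n%:R.
Proof.
move=> sparse; rewrite setIC card_axis_line.
have line_cover : [set t | upd x i t \in dense_hull] \subset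
    \bigcup_(J : {set 'I_D} | i \notin J) [set t | dense J (upd x i t)].
  apply/subsetP => t /[!inE] /bigcupP [J _ /[!inE] dJ].
  apply/bigcupP; exists J; rewrite ?inE //; apply/negP => iJ.
  move: (sparse J iJ).
  by rewrite -(dense_axis_line iJ (upd_axis_line i x t)) dJ.
apply: (le_trans (y := \sum_(J : {set 'I_D} | i \notin J)
                          #|[set t | dense J (upd x i t)]|%:R)).
  rewrite -natr_sum ler_nat (leq_trans (subset_leq_card line_cover)) //.
  exact: card_bigcup_le.
have sparse_upd J (iJ : i \notin J) :=
  card_dense_upd iJ (sparse _ (setU11 i J)).
apply: le_trans (ler_sum _ sparse_upd) _.
apply: (le_trans (y := \sum_(J : {set 'I_D}) a * n%:R)).
  rewrite [leRHS](bigID (fun J => i \notin J)) /= lerDl.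
  by apply: sumr_ge0 => J _; rewrite mulr_ge0 ?ler0n.
by rewrite sumr_const -mulrA mulr_natl.
Qed.

Lemma dense_hull_closed (eps : R) :
  #|{set 'I_D}|%:R * a < eps -> eps_closed eps dense_hull.
Proof.
move=> Na_lt_eps i x; have [n0 | n_gt0] := posnP n.
  by left; apply/subsetP => y _; case: (y i) => m m_lt; rewrite n0 in m_lt.
have [/existsP [J /andP [iJ dJx]] | /existsPn sparse] :=
  boolP [exists J : {set 'I_D}, (i \in J) && dense J x].
  left; apply/subsetP => y yx; apply/bigcupP; exists J => //.
  by rewrite inE (dense_axis_line iJ yx).
right; apply: le_lt_trans (card_axis_line_dense_hull _) _.
  by move=> J iJ; have := sparse J; rewrite iJ.
by rewrite ltr_pM2r ?ltr0n.
Qed.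

Lemma card_dense_hull : a <= 1 ->
  #|dense_hull|%:R <= #|{set 'I_D}|%:R / a ^+ D * #|M|%:R.
Proof.
move=> a_le1; rewrite mulrAC ler_pdivlMr ?exprn_gt0 //.
apply: (le_trans (y := (\sum_J #|[set x | dense J x]|)%:R * a ^+ D)).
  by apply: ler_wpM2r; rewrite ?exprn_ge0 // ler_nat card_bigcup_le.
rewrite natr_sum mulr_suml mulr_natl -sumr_const; apply: ler_sum => J _.
apply: le_trans (card_dense J); rewrite ler_wpM2l ?ler0n // ler_wiXn2l //.
by rewrite -[X in (_ <= X)%N](card_ord D) max_card.
Qed.

End DenseHull.

Theorem lemma8 (R : realType) (eps : R) (D : nat) :
  0 < eps -> eps <= 1 ->
  exists c : R, 0 < c /\
    forall (n : nat) (M : {set grid D n}),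
      #|eps_closure eps M|%:R <= c * #|M|%:R.
Proof.
move=> eps_gt0 eps_le1; set N := #|{set 'I_D}|.
pose a := eps / N.+1%:R.
have a_gt0 : 0 < a by rewrite divr_gt0 ?ltr0n.
have a_le1 : a <= 1.
  by rewrite ler_pdivrMr ?ltr0n // mul1r (le_trans eps_le1) ?ler1n.
have Na_lt_eps : N%:R * a < eps.
  by rewrite mulrCA gtr_pMr // ltr_pdivrMr ?ltr0n // mul1r ltr_nat.
exists (N%:R / a ^+ D); split => [|n M].
  by rewrite divr_gt0 ?exprn_gt0 // ltr0n; apply/card_gt0P; exists set0.
apply: le_trans (card_dense_hull M a_gt0 a_le1).
rewrite ler_nat subset_leq_card //.
apply: eps_closure_min; [exact: sub_dense_hull | exact: dense_hull_closed].
Qed.
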